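(* For any two graphs $G_1$ and $G_2$, $st(G_1\times G_2)\le st(G_1)\,st(G_2)+st(G_1)+st(G_2)$.
   Context: $G_1\times G_2$ is the Cartesian product: vertex set $V_1\times V_2$, with $(u_1,u_2)$ adjacent to $(v_1,v_2)$ iff either $u_1=v_1$ and $u_2v_2$ is an edge of $G_2$, or $u_2=v_2$ and $u_1v_1$ is an edge of $G_1$. A sorted ordering of a graph on $n$ vertices is a bijection $\pi$ from its vertices to $\{1,\dots,n\}$. A directed matching is a matching some of whose edges are oriented. A sorting network on $G$ is a triple $\mathcal{S}(H,M,\pi)$ where $H$ is a connected spanning subgraph of $G$, $\pi$ a sorted ordering, and $M=(m_1,\dots,m_{|M|})$ a sequence of directed matchings of $H$ covering every edge of $H$ at least once; each vertex holds a pebble with a value, and at stage $i$ each directed edge $u\to v$ of $m_i$ puts the smaller of its two pebbles on $u$ and the larger on $v$, while each undirected edge of $m_i$ swaps its pebbles; after all stages, for every initial arrangement of $n$ distinct values, vertex $i$ must hold the pebble of rank $\pi(i)$. The depth is $|M|$. The sorting number $st(G)$ is the minimum depth of any sorting network on $G$ (over all spanning subgraphs and sorted orderings); $st(G)=\infty$ if none exists. *)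

From mathcomp Require Import all_boot.
Set Implicit Arguments. Unset Strict Implicit. Unset Printing Implicit Defensive.

(* A (finite simple) graph is a vertex finType T with an edge relation e : rel T
   (symmetric, irreflexive: assumed as hypotheses where needed). *)

Definition cart_rel (T1 T2 : finType) (e1 : rel T1) (e2 : rel T2) : rel (T1 * T2) :=
  fun x y => ((x.1 == y.1) && e2 x.2 y.2) || ((x.2 == y.2) && e1 x.1 y.1).

Section Sorting.
Variable T : finType.

(* An edge of a directed matching: (u, v, true) is the directed edge u -> v
   (smaller pebble to u, larger to v); (u, v, false) is the undirected edge uv
   (swap). *)
Definition medge := (T * T * bool)%type.

Definition apply_edge (c : T -> nat) (t : medge) : T -> nat :=
  let: (u, v, b) := t in
  fun w => if b then
             (if w == u then minn (c u) (c v) else if w == v then maxn (c u) (c v) else c w)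
           else
             (if w == u then c v else if w == v then c u else c w).

(* Edges of a matching are vertex-disjoint, so the order of application in a
   stage is irrelevant. *)
Definition run_stage (c : T -> nat) (m : seq medge) : T -> nat := foldl apply_edge c m.
Definition run_net (c : T -> nat) (M : seq (seq medge)) : T -> nat := foldl run_stage c M.

Definition is_dmatching (h : rel T) (m : seq medge) : bool :=
  all (fun t => h t.1.1 t.1.2) m && uniq (flatten [seq [:: t.1.1; t.1.2] | t <- m]).

(* Sorted ordering pi uses
   ranks 0..n-1 (rank k+1 in the paper = k here). The rank of a value among the
   initial values a is the number of initial values strictly below it. *)
Definition sorting_network (e h : rel T) (M : seq (seq medge)) (pi : T -> 'I_#|T|) : Prop :=
  [/\ [/\ subrel h e, symmetric h & (forall x y, connect h x y)],
      all (is_dmatching h) M,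
      (forall x y, h x y ->
         exists m, m \in M /\ exists b, ((x, y, b) \in m) || ((y, x, b) \in m)),
      bijective pi &
      forall a : T -> nat, injective a ->
        forall i, #|[set y | a y < run_net a M i]| = pi i ].

Definition sorting_number (e : rel T) (s : nat) : Prop :=
  (exists h M pi, sorting_network e h M pi /\ size M = s) /\
  (forall h M pi, sorting_network e h M pi -> s <= size M).

End Sorting.

From mathcomp Require Import all_boot zify.
From Stdlib Require Import FunctionalExtensionality Classical.
Set Implicit Arguments. Unset Strict Implicit. Unset Printing Implicit Defensive.

(* The product network runs, for each stage m of the network on G1, the network on G2
   in every row {u} x G2 and then the stage m in every column G1 x {w}, and ends with a
   last pass of the network on G2 in every row; its depth is s1 (s2 + 1) + s2.  Rows
   receiving the maxima of a directed edge of m are sorted in reverse, so that each column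
   comparison merges two oppositely sorted rows.
   By the 0-1 principle it suffices to sort 0-1 inputs.  After a row pass each row is
   sorted, hence determined by its number of ones, and a column comparison acts on these
   numbers as (x, y) |-> (x + y - n2, min(n2, x + y)).  Such a count vector splits into n2
   0-1 vectors of balanced weights whose images under the network on G1 add up to the
   image of the counts; each of them is sorted by that network, which determines the
   final counts and hence the output. *)

Lemma homo_minn (f : nat -> nat) x y :
  {homo f : x y / x <= y} -> f (minn x y) = minn (f x) (f y).
Proof.
move=> hf; case: (leqP x y) => h; first by rewrite (minn_idPl (hf _ _ h)).
by rewrite (minn_idPr (hf _ _ (ltnW h))).
Qed.

Lemma homo_maxn (f : nat -> nat) x y :
  {homo f : x y / x <= y} -> f (maxn x y) = maxn (f x) (f y).
Proof.
move=> hf; case: (leqP x y) => h; first by rewrite (maxn_idPr (hf _ _ h)).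
by rewrite (maxn_idPl (hf _ _ (ltnW h))).
Qed.

Lemma anti_minn (f : nat -> nat) x y :
  {homo f : x y /~ x <= y} -> f (minn x y) = maxn (f x) (f y).
Proof.
move=> hf; case: (leqP x y) => h; first by rewrite (maxn_idPl (hf _ _ h)).
by rewrite (maxn_idPr (hf _ _ (ltnW h))).
Qed.

Lemma anti_maxn (f : nat -> nat) x y :
  {homo f : x y /~ x <= y} -> f (maxn x y) = minn (f x) (f y).
Proof.
move=> hf; case: (leqP x y) => h; first by rewrite (minn_idPr (hf _ _ h)).
by rewrite (minn_idPl (hf _ _ (ltnW h))).
Qed.

Lemma homo_leq_indicator t : {homo (fun x => nat_of_bool (t <= x)) : x y / x <= y}.
Proof. by move=> x y h; case: (boolP (t <= x)) => //= tx; rewrite (leq_trans tx h). Qed.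

Section Stages.
Variable T : finType.
Implicit Types (c d : T -> nat) (t : medge T) (m l : seq (medge T)).

Definition stage_ends m : seq T := flatten [seq [:: t.1.1; t.1.2] | t <- m].

Lemma stage_ends_cons t m : stage_ends (t :: m) = [:: t.1.1; t.1.2] ++ stage_ends m.
Proof. by []. Qed.

Lemma stage_ends_flatten (L : seq (seq (medge T))) :
  stage_ends (flatten L) = flatten (map stage_ends L).
Proof. by elim: L => //= m L IH; rewrite /stage_ends map_cat flatten_cat -IH. Qed.

Lemma mem_stage_ends m t : t \in m -> (t.1.1 \in stage_ends m) && (t.1.2 \in stage_ends m).
Proof.
elim: m => // t0 m IH; rewrite inE stage_ends_cons => /orP[/eqP ->|/IH/andP[h1 h2]].
  by rewrite !mem_cat !inE !eqxx /= orbT.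
by rewrite !mem_cat h1 h2 !orbT.
Qed.

Lemma stage_edge_neq m t : uniq (stage_ends m) -> t \in m -> t.1.1 != t.1.2.
Proof.
elim: m => // t0 m IH; rewrite stage_ends_cons cat_uniq => /and3P[U0 _ Um].
by rewrite inE => /orP[/eqP ->|/IH]; [move: U0; rewrite /= inE andbT | apply].
Qed.

Lemma stage_edge_unique m t t' w : uniq (stage_ends m) -> t \in m -> t' \in m ->
  (w == t.1.1) || (w == t.1.2) -> (w == t'.1.1) || (w == t'.1.2) -> t = t'.
Proof.
elim: m => // t0 m IH; rewrite stage_ends_cons cat_uniq => /and3P[_ Hn Um].
have Hx t1 x : t1 \in m -> (x == t1.1.1) || (x == t1.1.2) -> x \notin [:: t0.1.1; t0.1.2].
  move=> h1 hx; apply/negP => hx0; move/hasP: Hn; apply; exists x => //.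
  by case/andP: (mem_stage_ends h1) => a b; case/orP: hx => /eqP ->.
rewrite !inE => /orP[/eqP ->|Ht] /orP[/eqP ->|Ht'] H1 H2 //.
- by move: (Hx _ _ Ht' H2); rewrite !inE; case/orP: H1 => ->; rewrite ?orbT.
- by move: (Hx _ _ Ht H1); rewrite !inE; case/orP: H2 => ->; rewrite ?orbT.
- exact: IH.
Qed.

Lemma run_net_cat c M M' : run_net c (M ++ M') = run_net (run_net c M) M'.
Proof. exact: foldl_cat. Qed.

Lemma run_net_flatten c M : run_net c M = foldl (@apply_edge T) c (flatten M).
Proof. by elim: M c => //= m M IH c; rewrite foldl_cat -IH. Qed.

Lemma run_edges_range c l w : exists y, foldl (@apply_edge T) c l w = c y.
Proof.
elim: l c w => [|[[u v] b] l IH] c w /=; first by exists w.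
have [y ->] := IH (apply_edge c (u, v, b)) w; rewrite /= /minn /maxn.
by case: b; repeat case: ifP => _; eexists.
Qed.

Lemma run_net_range c M w : exists y, run_net c M w = c y.
Proof. by rewrite run_net_flatten; apply: run_edges_range. Qed.

Lemma run_net_binary c M w : (forall x, c x <= 1) -> run_net c M w <= 1.
Proof. by have [y ->] := run_net_range c M w. Qed.

End Stages.

Section Relabel.
Variable T : finType.
Implicit Types (c : T -> nat) (l : seq (medge T)).

Definition reverse_edge (t : medge T) : medge T :=
  let: (u, v, b) := t in if b then (v, u, true) else (u, v, false).

Lemma run_edges_homo (f : nat -> nat) c l : {homo f : x y / x <= y} ->
  foldl (@apply_edge T) (f \o c) l = f \o foldl (@apply_edge T) c l.
Proof.
move=> hf; elim: l c => //= t l IH c; rewrite -IH; congr foldl.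
apply: functional_extensionality => w /=; case: t => [[u v] b] /=.
by case: b; case: (w == u); case: (w == v); rewrite /= ?homo_minn ?homo_maxn.
Qed.

Lemma run_edges_anti (f : nat -> nat) c l : {homo f : x y /~ x <= y} ->
  foldl (@apply_edge T) (f \o c) (map reverse_edge l) = f \o foldl (@apply_edge T) c l.
Proof.
move=> hf; elim: l c => //= t l IH c; rewrite -IH; congr foldl.
apply: functional_extensionality => w /=; case: t => [[u v] []] /=; last first.
  by case: (w == u); case: (w == v).
case: (eqVneq w v) => [->|nv].
  case: (eqVneq v u) => [->|nvu]; first by rewrite ?eqxx /= ?minnn ?maxnn.
  by rewrite ?eqxx /= ?(negbTE nvu) anti_maxn // minnC.
by case: (w == u); rewrite // anti_minn // maxnC.
Qed.

Lemma perm_stage_ends_reverse (m : seq (medge T)) :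
  perm_eq (stage_ends (map reverse_edge m)) (stage_ends m).
Proof.
elim: m => //= t m IH; rewrite !stage_ends_cons; case: t => [[u v] []] /=.
  by rewrite (perm_catCA [:: v] [:: u]) /= !perm_cons.
by rewrite /= !perm_cons.
Qed.

End Relabel.

Section Locality.
Variables (T : finType) (A : Type).
Variable act : (T -> A) -> medge T -> T -> A.
Hypothesis act_out : forall c t w, w != t.1.1 -> w != t.1.2 -> act c t w = c w.
Hypothesis act_local : forall c c' t w, c t.1.1 = c' t.1.1 -> c t.1.2 = c' t.1.2 ->
  (w == t.1.1) || (w == t.1.2) -> act c t w = act c' t w.

Lemma act_stage_out m c w :
  (forall t, t \in m -> (w != t.1.1) && (w != t.1.2)) -> foldl act c m w = c w.
Proof.
elim: m c => //= t0 m IH c H.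
rewrite IH; last by move=> t ht; apply: H; rewrite inE ht orbT.
by case/andP: (H t0 (mem_head _ _)) => h1 h2; rewrite act_out.
Qed.

Lemma act_stage_in m c t w : uniq (stage_ends m) -> t \in m ->
  (w == t.1.1) || (w == t.1.2) -> foldl act c m w = act c t w.
Proof.
elim: m c => // t0 m IH c.
rewrite stage_ends_cons cat_uniq => /and3P[_ Hn Um]; rewrite inE /= => /orP[/eqP ->|Ht] Hw.
  have Hw' : w \notin stage_ends m.
    apply/negP => hw; move/hasP: Hn; apply; exists w => //.
    by case/orP: Hw => /eqP ->; rewrite !inE eqxx ?orbT.
  apply: act_stage_out => t' ht'; case/andP: (mem_stage_ends ht') => h1 h2.
  by apply/andP; split; apply/negP => /eqP E; move: Hw'; rewrite E ?h1 ?h2.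
have Hno x : x \in stage_ends m -> (x != t0.1.1) && (x != t0.1.2).
  move=> hx; apply/andP; split; apply/negP => /eqP E; move/hasP: Hn; apply; exists x => //;
  by rewrite E !inE eqxx ?orbT.
have [h1 h2] := andP (mem_stage_ends Ht).
have [a1 a2] := andP (Hno _ h1); have [b1 b2] := andP (Hno _ h2).
by rewrite (IH _ Um Ht Hw); apply: act_local => //; apply: act_out.
Qed.

End Locality.

Section ApplyEdge.
Variable T : finType.
Implicit Types (c : T -> nat) (t : medge T).

Lemma apply_edge_out c t w : w != t.1.1 -> w != t.1.2 -> apply_edge c t w = c w.
Proof. by case: t => [[u v] b] /= /negbTE -> /negbTE ->; case: b. Qed.

Lemma apply_edge_local c c' t w : c t.1.1 = c' t.1.1 -> c t.1.2 = c' t.1.2 ->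
  (w == t.1.1) || (w == t.1.2) -> apply_edge c t w = apply_edge c' t w.
Proof.
by case: t => [[u v] b] /= h1 h2 /orP[/eqP ->|/eqP ->]; rewrite ?eqxx h1 h2 //; case: (v == u).
Qed.

Lemma run_stage_in c m t w : uniq (stage_ends m) -> t \in m ->
  (w == t.1.1) || (w == t.1.2) -> run_stage c m w = apply_edge c t w.
Proof. exact: (act_stage_in apply_edge_out apply_edge_local). Qed.

Lemma run_stage_out c m w :
  (forall t, t \in m -> (w != t.1.1) && (w != t.1.2)) -> run_stage c m w = c w.
Proof. exact: (act_stage_out apply_edge_out). Qed.

End ApplyEdge.

(** * The 0-1 principle *)

Section ZeroOnePrinciple.
Variable T : finType.
Implicit Types (M : seq (seq (medge T))) (pi : T -> 'I_#|T|).

Definition sorts_ranks M pi := forall a : T -> nat, injective a ->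
  forall i, #|[set y | a y < run_net a M i]| = pi i.

(* A 0-1 input with k ones is sorted when its ones occupy the k positions of highest rank. *)
Definition sorts_binary M pi := forall b : T -> nat, (forall y, b y <= 1) ->
  forall i, run_net b M i = (#|T| - #|[set y | 0 < b y]| <= pi i).

Lemma card_lt_compl (a : T -> nat) t :
  #|T| - #|[set y | t <= a y]| = #|[set y | a y < t]|.
Proof.
have -> : [set y | a y < t] = ~: [set y | t <= a y] by apply/setP => y; rewrite !inE ltnNge.
by rewrite -(cardsC [set y | t <= a y]) addKn.
Qed.

Lemma threshold_of_ranks M pi a : sorts_ranks M pi -> injective a -> forall t i,
  (t <= run_net a M i) = (#|[set y | a y < t]| <= pi i).
Proof.
move=> Hrank ia t i; rewrite -(Hrank a ia i); apply/idP/idP => H.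
  by apply: subset_leq_card; apply/subsetP => y; rewrite !inE => h; apply: leq_trans H.
apply: contraTT H; rewrite -!ltnNge => H.
have [y0 Hy0] := run_net_range a M i.
apply: proper_card; apply/properP; split.
  by apply/subsetP => y; rewrite !inE => h; apply: ltn_trans H.
by exists y0; rewrite !inE -Hy0 ?ltnn.
Qed.

Lemma sorts_binary_of_ranks M pi : sorts_ranks M pi -> sorts_binary M pi.
Proof.
move=> Hrank b b01 i; set N := #|T|.
have lt_rank (y : T) : enum_rank y < N by exact: ltn_ord.
(* A 0-1 input is a threshold image of an injective input: break ties by enum_rank. *)
pose a y := b y * N + enum_rank y.
have ia : injective a.
  move=> x y /(congr1 (modn^~ N)); rewrite !modnMDl !modn_small //.
  by move/val_inj/enum_rank_inj.
have b_thr y : b y = (N <= a y).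
  rewrite /a; have := b01 y; case: (b y) => [|[|//]] _.
    by rewrite mul0n add0n leqNgt lt_rank.
  by rewrite mul1n leq_addr.
have -> : b = (fun x => nat_of_bool (N <= x)) \o a by apply: functional_extensionality.
rewrite run_net_flatten run_edges_homo; last exact: homo_leq_indicator.
rewrite -run_net_flatten /= (threshold_of_ranks Hrank ia) -card_lt_compl.
by congr (nat_of_bool (_ - _ <= _)); apply: eq_card => y; rewrite !inE lt0b.
Qed.

Lemma sorts_binary_threshold M pi : sorts_binary M pi -> forall (a : T -> nat) t i,
  (t <= run_net a M i) = (#|T| - #|[set y | t <= a y]| <= pi i).
Proof.
move=> Hs a t i; pose f x := nat_of_bool (t <= x).
have := Hs (f \o a) (fun y => leq_b1 _) i.
rewrite run_net_flatten run_edges_homo; last exact: homo_leq_indicator.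
rewrite -run_net_flatten /=.
have -> : [set y | 0 < f (a y)] = [set y | t <= a y] by apply/setP => y; rewrite !inE lt0b.
by rewrite /f; do 2 case: (_ <= _).
Qed.

Lemma sorts_ranks_of_binary M pi : sorts_binary M pi -> sorts_ranks M pi.
Proof.
move=> /sorts_binary_threshold Hs a ia i.
have [y0 Hy0] := run_net_range a M i; set o := run_net a M i in Hy0 *.
have H1 := Hs a o i; rewrite leqnn card_lt_compl in H1.
have H2 := Hs a o.+1 i; rewrite ltnn card_lt_compl in H2.
have E : [set y | a y < o.+1] = y0 |: [set y | a y < o].
  apply/setP => y; rewrite !inE ltnS leq_eqVlt; congr (_ || _).
  by rewrite Hy0; apply/eqP/eqP => [/ia|->].
rewrite E cardsU1 !inE -Hy0 ltnn add1n in H2.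
by apply/eqP; rewrite eqn_leq -H1 leqNgt -H2.
Qed.

End ZeroOnePrinciple.

(** * Decomposing row counts into balanced 0-1 vectors *)

Lemma sumn_subn_all (I : Type) (r : seq I) (F G : I -> nat) : all (fun i => F i <= G i) r ->
  \sum_(i <- r) (G i - F i) = \sum_(i <- r) G i - \sum_(i <- r) F i.
Proof. by move=> h; rewrite -(all_filterP h) !big_filter; apply: sumnB. Qed.

Section BinaryVectors.
Variable T : finType.
Implicit Types (d : T -> nat) (D : seq (T -> nat)).

Definition binary d := [forall w, d w <= 1].
Definition weight d := \sum_(w : T) d w.

Lemma binary_le1 d w : binary d -> d w <= 1.
Proof. by move/forallP. Qed.

Lemma sum_binary_le_size D w : all binary D -> \sum_(d <- D) d w <= size D.
Proof.
elim: D => [|d D IH]; first by rewrite big_nil.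
by rewrite big_cons /= => /andP[zd /IH h]; have := binary_le1 w zd; lia.
Qed.

Lemma sum_binary_eq_size D w : all binary D -> \sum_(d <- D) d w = size D ->
  all (fun d => d w == 1) D.
Proof.
elim: D => [|d D IH] //=; rewrite big_cons => /andP[zd zD] h.
have h1 := binary_le1 w zd; have h2 := sum_binary_le_size w zD.
by rewrite IH //; [rewrite andbT; apply/eqP; lia | lia].
Qed.

Lemma card_pos_binary d : binary d -> #|[set y | 0 < d y]| = weight d.
Proof.
move=> zd; rewrite /weight -sum1_card big_mkcond /=; apply: eq_bigr => y _.
by rewrite inE; have := binary_le1 y zd; case: (d y) => [|[]].
Qed.

Definition set_one x d : T -> nat := fun w => if w == x then 1 else d w.

Lemma weight_set_one x d : d x = 0 -> weight (set_one x d) = (weight d).+1.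
Proof.
move=> dx0; rewrite /weight (bigD1 x) // [in RHS](bigD1 x) //= /set_one eqxx dx0.
by congr (_.+1); apply: eq_bigr => w /negbTE ->.
Qed.

Definition swap_at u v d : T -> nat :=
  fun w => if w == u then d v else if w == v then d u else d w.

Lemma weight_swap_at u v d : weight (swap_at u v d) = weight d.
Proof.
pose tp w := if w == u then v else if w == v then u else w.
have tpK : involutive tp.
  move=> w; rewrite /tp.
  case: (eqVneq w u) => [->|nu]; first by case: (eqVneq v u) => [->|nvu]; rewrite ?eqxx.
  case: (eqVneq w v) => [->|nv]; first by rewrite ?eqxx.
  by rewrite (negbTE nu) (negbTE nv).
rewrite /weight [in RHS](reindex_inj (inv_inj tpK)) /=; apply: eq_bigr => w _.
by rewrite /swap_at /tp; case: (eqVneq w u) => [_|nu] //; case: (eqVneq w v).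
Qed.

Lemma binary_swap_at u v d : binary d -> binary (swap_at u v d).
Proof.
by move/forallP => h; apply/forallP => w; rewrite /swap_at; case: (w == u); case: (w == v).
Qed.

End BinaryVectors.
Arguments binary {T}. Arguments weight {T}.

Section Counting.
Variables (T : finType) (m : nat).
Implicit Types (c d : T -> nat) (D : seq (T -> nat)) (t : medge T).

(* The effect of a column compare-exchange on the numbers of ones of sorted rows of
   length m, the two rows being sorted in opposite directions: the row receiving the
   minima keeps the overlap of the two blocks of ones, the other one their union. *)
Definition count_edge c t : T -> nat :=
  let: (u, v, b) := t in fun w =>
    if b then (if w == u then c u + c v - m else if w == v then minn m (c u + c v) else c w)
    else (if w == u then c v else if w == v then c u else c w).

Definition balanced D := exists q i, i <= m /\ map weight D = nseq i q ++ nseq (m - i) q.+1.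

Lemma size_balanced D : balanced D -> size D = m.
Proof. by case=> q [i [im eD]]; rewrite -(size_map weight) eD size_cat !size_nseq; lia. Qed.

Lemma nseq_rotate_succ q i a : i <= m -> a <= m ->
  exists q' i', i' <= m /\
   drop a (nseq i q ++ nseq (m - i) q.+1) ++ map succn (take a (nseq i q ++ nseq (m - i) q.+1))
   = nseq i' q' ++ nseq (m - i') q'.+1.
Proof.
move=> im am; case: (leqP a i) => ai.
  have -> : nseq i q ++ nseq (m - i) q.+1 = nseq a q ++ (nseq (i - a) q ++ nseq (m - i) q.+1).
    by rewrite catA -nseqD subnKC.
  rewrite drop_size_cat ?size_nseq // take_size_cat ?size_nseq // map_nseq.
  exists q, (i - a); split; first lia.
  by rewrite -catA -nseqD; congr (_ ++ nseq _ _); lia.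
have -> : nseq i q ++ nseq (m - i) q.+1 = (nseq i q ++ nseq (a - i) q.+1) ++ nseq (m - a) q.+1.
  by rewrite -catA -nseqD; congr (_ ++ nseq _ _); lia.
rewrite drop_size_cat ?size_cat ?size_nseq; last lia.
rewrite take_size_cat ?size_cat ?size_nseq; last lia.
rewrite map_cat !map_nseq; exists q.+1, (m - a + i); split; first lia.
by rewrite catA -nseqD; congr (_ ++ nseq _ _); lia.
Qed.

Lemma all_take_drop (A : Type) (P : pred A) k (s : seq A) :
  all P s -> all P (take k s) /\ all P (drop k s).
Proof. by rewrite -{1}(cat_take_drop k s) all_cat => /andP. Qed.

(* Greedily add the ones of each coordinate to the lightest vectors: the weights stay
   balanced. *)
Lemma balanced_decomposition c (s : seq T) : (forall u, c u <= m) -> uniq s ->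
  exists D, [/\ all binary D, forall w, \sum_(d <- D) d w = (if w \in s then c w else 0)
    & balanced D].
Proof.
move=> cm; elim: s => [|x s IH] /=.
  exists (nseq m (fun _ => 0)); split.
  - by rewrite all_nseq; apply/orP; right; apply/forallP.
  - by move=> w; rewrite big_nseq; elim: m.
  - exists 0, m; split => //; rewrite subnn /= cats0 map_nseq; congr nseq.
    by rewrite /weight big1.
case/andP => xs us; have [D [zD sD [q [i [im eD]]]]] := IH us.
have szD : size D = m by apply: size_balanced; exists q, i.
have Dx : all (fun d => d x == 0) D.
  by rewrite -(sum_nat_seq_eq0 _ predT) sD (negbTE xs).
have [zt zd] := all_take_drop (c x) zD; have [t0 d0] := all_take_drop (c x) Dx.
exists (drop (c x) D ++ map (set_one x) (take (c x) D)); split.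
- rewrite all_cat zd /= all_map; apply: sub_all zt => d /forallP zd1 /=.
  by apply/forallP => w; rewrite /set_one; case: (w == x).
- move=> w; rewrite big_cat /= big_map inE.
  case: (eqVneq w x) => [->|nwx] /=.
    have -> : \sum_(d <- drop (c x) D) d x = 0 by apply/eqP; rewrite sum_nat_seq_eq0.
    rewrite add0n /set_one (eq_bigr (fun _ => 1)) ?eqxx // sum1_size size_takel // szD.
    exact: cm.
  rewrite -sD -{3}(cat_take_drop (c x) D) big_cat /= addnC; congr (_ + _).
  by apply: eq_bigr => d _; rewrite /set_one (negbTE nwx).
- have [q' [i' [im' E']]] := nseq_rotate_succ q im (cm x).
  exists q', i'; split => //; rewrite -E' map_cat map_drop eD; congr (_ ++ _).
  rewrite -eD -map_take; elim: (take (c x) D) t0 => //= d l IHl /andP[/eqP dx hl].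
  by rewrite weight_set_one // IHl.
Qed.

(* A vector d with d u <= d v is fixed by the edge u -> v, and so is its swap when
   d u = 0 < d v = 1; choosing a swaps moves a units of the sum from v back to u. *)
Lemma sort_edge_preimage u v D' a : u != v -> all binary D' ->
  all (fun d => d u <= d v) D' -> a <= \sum_(d <- D') (d v - d u) ->
  exists D, [/\ all binary D, map (fun d => apply_edge d (u, v, true)) D = D',
    map weight D = map weight D',
    \sum_(d <- D) d u = \sum_(d <- D') d u + a &
    (\sum_(d <- D) d v = \sum_(d <- D') d v - a /\
     forall w, w != u -> w != v -> \sum_(d <- D) d w = \sum_(d <- D') d w)].
Proof.
move=> nuv; elim: D' a => [|d D' IH] a.
  by move=> _ _; rewrite big_nil leqn0 => /eqP ->; exists [::]; rewrite addn0 subn0.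
move=> /= /andP[zd zD] /andP[duv aD]; rewrite big_cons => ha.
have du1 := binary_le1 u zd; have dv1 := binary_le1 v zd.
have sD : \sum_(d0 <- D') (d0 v - d0 u) <= \sum_(d0 <- D') d0 v.
  by apply: leq_sum => d0 _; apply: leq_subr.
have nvu : v != u by rewrite eq_sym.
case: (boolP ((0 < a) && (d u < d v))) => [/andP[a0 lt]|nf].
  have du0 : d u = 0 by lia.
  have dv0 : d v = 1 by lia.
  have [D1 [z1 e1 s1 su1 [sv1 sw1]]] := IH (a - 1) zD aD (ltac:(lia)).
  exists (swap_at u v d :: D1); split.
  - by rewrite /= binary_swap_at.
  - rewrite /= e1; congr (_ :: _); apply: functional_extensionality => w.
    rewrite /swap_at eqxx (negbTE nvu) eqxx du0 dv0.
    case: (eqVneq w u) => [->|nu]; first by rewrite du0.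
    by case: (eqVneq w v) => [->|nv]; rewrite ?dv0.
  - by rewrite /= s1 weight_swap_at.
  - by rewrite !big_cons su1 /swap_at eqxx; lia.
  - split; first by rewrite !big_cons sv1 /swap_at (negbTE nvu) eqxx; lia.
    by move=> w nu nv; rewrite !big_cons sw1 // /swap_at (negbTE nu) (negbTE nv).
have ha' : a <= \sum_(d0 <- D') (d0 v - d0 u).
  by move: nf; rewrite negb_and -!leqNgt => /orP[h|h]; lia.
have [D1 [z1 e1 s1 su1 [sv1 sw1]]] := IH a zD aD ha'.
exists (d :: D1); split.
- by rewrite /= zd.
- rewrite /= e1; congr (_ :: _); apply: functional_extensionality => w /=.
  rewrite (minn_idPl duv) (maxn_idPr duv).
  by case: (eqVneq w u) => [->|nu] //; case: (eqVneq w v) => [->|nv].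
- by rewrite /= s1.
- by rewrite !big_cons su1; lia.
- split; first by rewrite !big_cons sv1; have := sum_binary_le_size v z1; lia.
  by move=> w nu nv; rewrite !big_cons sw1.
Qed.

Lemma count_edge_out c t w : w != t.1.1 -> w != t.1.2 -> count_edge c t w = c w.
Proof. by case: t => [[u v] b] /= /negbTE -> /negbTE ->; case: b. Qed.

Lemma count_edge_local c c' t w : c t.1.1 = c' t.1.1 -> c t.1.2 = c' t.1.2 ->
  (w == t.1.1) || (w == t.1.2) -> count_edge c t w = count_edge c' t w.
Proof.
by case: t => [[u v] b] /= h1 h2 /orP[/eqP ->|/eqP ->]; rewrite ?eqxx h1 h2 //; case: (v == u).
Qed.

Lemma count_stage_in c l t w : uniq (stage_ends l) -> t \in l ->
  (w == t.1.1) || (w == t.1.2) -> foldl count_edge c l w = count_edge c t w.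
Proof. exact: (act_stage_in count_edge_out count_edge_local). Qed.

Lemma count_stage_out c l w :
  (forall t, t \in l -> (w != t.1.1) && (w != t.1.2)) -> foldl count_edge c l w = c w.
Proof. exact: (act_stage_out count_edge_out). Qed.

Lemma count_sort_edge_preimage c D' u v : (forall w, c w <= m) -> u != v ->
  all binary D' -> size D' = m ->
  (forall w, \sum_(d <- D') d w = count_edge c (u, v, true) w) ->
  exists D, [/\ all binary D, map (fun d => apply_edge d (u, v, true)) D = D',
    forall w, \sum_(d <- D) d w = c w & map weight D = map weight D'].
Proof.
move=> cm nuv zD' szD' sD'; have cu := cm u; have cv := cm v.
have Hu := sD' u; rewrite /= eqxx in Hu.
have Hv := sD' v; rewrite /= eqxx eq_sym (negbTE nuv) in Hv.
have Huv : all (fun d => d u <= d v) D'.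
  case: (leqP m (c u + c v)) => hm.
    have allv1 : all (fun d => d v == 1) D'.
      by apply: sum_binary_eq_size zD' _; rewrite Hv szD' (minn_idPl hm).
    have : all (predI binary (fun d => d v == 1)) D' by rewrite all_predI zD' allv1.
    by apply: sub_all => d /andP[/forallP/(_ u) zd /eqP ->].
  have : \sum_(d <- D') d u == 0 by rewrite Hu; apply/eqP; lia.
  by rewrite sum_nat_seq_eq0 => h; apply: sub_all h => d /eqP ->.
have ha : c u - (c u + c v - m) <= \sum_(d <- D') (d v - d u).
  by rewrite sumn_subn_all // Hu Hv; lia.
have [D [zD eD szD su [sv sw]]] := sort_edge_preimage nuv zD' Huv ha.
exists D; split => // w.
case: (eqVneq w u) => [->|nu]; first by rewrite su Hu; lia.
case: (eqVneq w v) => [->|nv]; first by rewrite sv Hv; lia.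
by rewrite sw // sD' /= (negbTE nu) (negbTE nv).
Qed.

Lemma count_swap_edge_preimage c D' u v : u != v ->
  all binary D' -> (forall w, \sum_(d <- D') d w = count_edge c (u, v, false) w) ->
  exists D, [/\ all binary D, map (fun d => apply_edge d (u, v, false)) D = D',
    forall w, \sum_(d <- D) d w = c w & map weight D = map weight D'].
Proof.
move=> nuv zD' sD'; have nvu : v != u by rewrite eq_sym.
exists (map (swap_at u v) D'); split.
- by rewrite all_map; apply: sub_all zD' => d; exact: binary_swap_at.
- rewrite -map_comp -[RHS]map_id; apply: eq_map => d /=.
  apply: functional_extensionality => w; rewrite /swap_at.
  case: (eqVneq w u) => [->|nu]; rewrite ?eqxx ?(negbTE nvu) //.
  by case: (eqVneq w v) => [->|nv]; rewrite ?eqxx ?(negbTE nvu) ?(negbTE nu) ?(negbTE nv).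
- move=> w; rewrite big_map; have := sD'; rewrite /swap_at /=.
  case: (eqVneq w u) => [->|nu] Hs; first by rewrite Hs eq_sym (negbTE nuv) eqxx.
  case: (eqVneq w v) => [->|nv]; first by rewrite Hs eqxx.
  by rewrite Hs (negbTE nu) (negbTE nv).
- by rewrite -map_comp; apply: eq_map => d /=; exact: weight_swap_at.
Qed.

Lemma count_run_decomposition l c : (forall w, c w <= m) ->
  all (fun t => t.1.1 != t.1.2) l ->
  exists D, [/\ all binary D, forall w, \sum_(d <- D) d w = c w, balanced D &
    forall w, foldl count_edge c l w = \sum_(d <- D) foldl (@apply_edge T) d l w].
Proof.
elim: l c => [|t l IH] c cm.
  move=> _; have [D [zD sD bD]] := balanced_decomposition cm (enum_uniq T).
  by exists D; split => // w; rewrite sD mem_enum.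
case: t => [[u v] b] /= /andP[nuv al].
have c'm w : count_edge c (u, v, b) w <= m.
  by have := cm u; have := cm v; have := cm w; case: b => /=; case: (w == u); case: (w == v); lia.
have [D' [zD' sD' bD' fD']] := IH _ c'm al.
have [D [zD eD sD wD]] : exists D, [/\ all binary D,
    map (fun d => apply_edge d (u, v, b)) D = D', forall w, \sum_(d <- D) d w = c w &
    map weight D = map weight D'].
  case: b sD' {c'm fD'} => sD'.
    exact: count_sort_edge_preimage cm nuv zD' (size_balanced bD') sD'.
  exact: count_swap_edge_preimage nuv zD' sD'.
exists D; split => //; first by case: bD' => q [i [im E]]; exists q, i; rewrite wD.
by move=> w; rewrite fD' -eD big_map.
Qed.

End Counting.

(** * The product network *)

Lemma uniq_flatten_map (I X : eqType) (s : seq I) (L : I -> seq X) : uniq s ->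
  (forall i, uniq (L i)) -> (forall i j x, x \in L i -> x \in L j -> i = j) ->
  uniq (flatten (map L s)).
Proof.
move=> us uL dL; elim: s us => //= i s IH /andP[ni us]; rewrite cat_uniq uL IH // andbT.
apply/hasP => [[x /flattenP [l /mapP [j js ->] xj] xi]].
by move: ni; rewrite (dL _ _ _ xi xj) js.
Qed.

Section ProductNetwork.
Variables T1 T2 : finType.
Local Notation stage1 := (seq (medge T1)).
Local Notation stage2 := (seq (medge T2)).

Definition row_edge (u : T1) (t : medge T2) : medge (T1 * T2)%type :=
  let: (a, b, bb) := t in ((u, a), (u, b), bb).
Definition col_edge (w : T2) (t : medge T1) : medge (T1 * T2)%type :=
  let: (a, b, bb) := t in ((a, w), (b, w), bb).

Definition orient (rev : bool) (m2 : stage2) := if rev then map (@reverse_edge T2) m2 else m2.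
Definition row_stage (rev : T1 -> bool) (m2 : stage2) :=
  flatten [seq map (row_edge u) (orient (rev u) m2) | u <- enum T1].
Definition row_block (M2 : seq stage2) rev := map (row_stage rev) M2.
Definition col_stage (m : stage1) := flatten [seq map (col_edge w) m | w <- enum T2].

(* The rows to be sorted in reverse before the column stage for m. *)
Definition upper_ends (m : stage1) : T1 -> bool := fun u => has (fun t => t.2 && (t.1.2 == u)) m.

Fixpoint prod_net (M1 : seq stage1) (M2 : seq stage2) : seq (seq (medge (T1 * T2)%type)) :=
  if M1 is m :: M1' then row_block M2 (upper_ends m) ++ col_stage m :: prod_net M1' M2
  else row_block M2 (fun _ => false).

Lemma size_prod_net (M1 : seq stage1) (M2 : seq stage2) :
  size (prod_net M1 M2) = size M1 * (size M2).+1 + size M2.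
Proof.
elim: M1 => [|m M1 IH] /=; first by rewrite size_map.
by rewrite size_cat /= IH size_map mulSn; lia.
Qed.

Lemma mem_prod_net (M1 : seq stage1) (M2 : seq stage2) s : s \in prod_net M1 M2 ->
  (exists rev m2, m2 \in M2 /\ s = row_stage rev m2) \/ (exists2 m, m \in M1 & s = col_stage m).
Proof.
elim: M1 => [|m M1 IH] /=.
  by move/mapP => [m2 hm ->]; left; exists (fun _ => false), m2.
rewrite mem_cat inE => /orP [/mapP [m2 hm ->]|/orP [/eqP ->|/IH]].
- by left; exists (upper_ends m), m2.
- by right; exists m; rewrite ?mem_head.
case=> [H|[m' hm ->]]; first by left.
by right; exists m'; rewrite // inE hm orbT.
Qed.

Lemma col_stage_in_prod_net (M1 : seq stage1) (M2 : seq stage2) (m : stage1) :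
  m \in M1 -> col_stage m \in prod_net M1 M2.
Proof.
elim: M1 => [|m' M1 IH] //=; rewrite inE mem_cat inE => /orP [/eqP ->|/IH ->].
  by rewrite eqxx orbT.
by rewrite !orbT.
Qed.

Lemma row_stages_in_prod_net (M1 : seq stage1) (M2 : seq stage2) :
  exists rev, forall m2, m2 \in M2 -> row_stage rev m2 \in prod_net M1 M2.
Proof.
case: M1 => [|m M1] /=; first by exists (fun _ => false) => m2 h; exact: map_f.
by exists (upper_ends m) => m2 h; rewrite mem_cat map_f.
Qed.

Lemma stage_ends_row_edges u (m2 : stage2) :
  stage_ends (map (row_edge u) m2) = map (pair u) (stage_ends m2).
Proof. by elim: m2 => //= t m IH; rewrite !stage_ends_cons IH; case: t => [[a b] bb]. Qed.

Lemma stage_ends_col_edges w (m : stage1) :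
  stage_ends (map (col_edge w) m) = map (pair^~ w) (stage_ends m).
Proof. by elim: m => //= t m' IH; rewrite !stage_ends_cons IH; case: t => [[a b] bb]. Qed.

Lemma uniq_orient rev (m2 : stage2) : uniq (stage_ends m2) -> uniq (stage_ends (orient rev m2)).
Proof. by case: rev => //=; rewrite (perm_uniq (perm_stage_ends_reverse m2)). Qed.

Lemma uniq_row_stage rev (m2 : stage2) :
  uniq (stage_ends m2) -> uniq (stage_ends (row_stage rev m2)).
Proof.
move=> um; rewrite /row_stage stage_ends_flatten -map_comp.
apply: uniq_flatten_map; first exact: enum_uniq.
  by move=> u /=; rewrite stage_ends_row_edges map_inj_uniq ?uniq_orient // => a b [].
by move=> i j x /=; rewrite !stage_ends_row_edges => /mapP[a _ ->] /mapP[b _ []].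
Qed.

Lemma uniq_col_stage (m : stage1) : uniq (stage_ends m) -> uniq (stage_ends (col_stage m)).
Proof.
move=> um; rewrite /col_stage stage_ends_flatten -map_comp.
apply: uniq_flatten_map; first exact: enum_uniq.
  by move=> w /=; rewrite stage_ends_col_edges map_inj_uniq // => a b [].
by move=> i j x /=; rewrite !stage_ends_col_edges => /mapP[a _ ->] /mapP[b _ []].
Qed.

Lemma mem_row_stage rev (m2 : stage2) u t :
  t \in orient (rev u) m2 -> row_edge u t \in row_stage rev m2.
Proof.
move=> ht; apply/flattenP; exists (map (row_edge u) (orient (rev u) m2)); last exact: map_f.
by apply/mapP; exists u; rewrite ?mem_enum.
Qed.

Lemma mem_col_stage (m : stage1) w t : t \in m -> col_edge w t \in col_stage m.
Proof.
move=> ht; apply/flattenP; exists (map (col_edge w) m); last exact: map_f.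
by apply/mapP; exists w; rewrite ?mem_enum.
Qed.

Lemma run_row_stage rev (m2 : stage2) (c : T1 * T2 -> nat) u w : uniq (stage_ends m2) ->
  run_stage c (row_stage rev m2) (u, w) = run_stage (fun a => c (u, a)) (orient (rev u) m2) w.
Proof.
move=> um; set m' := orient (rev u) m2.
have um' : uniq (stage_ends m') by exact: uniq_orient.
case: (boolP (has (fun t => (w == t.1.1) || (w == t.1.2)) m')) => [/hasP [t ht hw]|nh].
  rewrite (run_stage_in _ (uniq_row_stage rev um) (mem_row_stage ht)); last first.
    by case: t ht hw => [[a b] bb] /= _; rewrite !xpair_eqE eqxx.
  rewrite (run_stage_in _ um' ht hw).
  by case: t ht hw => [[a b] bb] _ _ /=; rewrite !xpair_eqE eqxx /=; case: bb.
rewrite !run_stage_out //.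
  move=> t ht; apply/negP => /negP; rewrite negb_and !negbK => hw.
  by move/hasP: nh; apply; exists t.
move=> t /flattenP [l /mapP [u' _ ->] /mapP [t' ht' ->]].
case: t' ht' => [[a b] bb] ht' /=; rewrite !xpair_eqE.
case: (eqVneq u u') => [eu|]; last by rewrite !andFb.
subst u'; rewrite !andTb; apply/negP => /negP; rewrite negb_and !negbK => hw.
by move/hasP: nh; apply; exists (a, b, bb).
Qed.

Lemma run_row_block (M2 : seq stage2) rev (c : T1 * T2 -> nat) u w :
  all (fun m2 => uniq (stage_ends m2)) M2 ->
  run_net c (row_block M2 rev) (u, w) = run_net (fun a => c (u, a)) (map (orient (rev u)) M2) w.
Proof.
elim: M2 c => //= m2 M2 IH c /andP[um uM]; rewrite IH //; congr run_net.
by apply: functional_extensionality => a; rewrite run_row_stage.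
Qed.

Lemma upper_ends_lower (m : stage1) p q :
  uniq (stage_ends m) -> (p, q, true) \in m -> upper_ends m p = false.
Proof.
move=> um ht; apply/negP => /hasP [t' ht' /andP [_ /eqP e]].
have := stage_edge_unique (w := p) um ht ht'; rewrite eqxx e eqxx orbT => /(_ erefl erefl) E.
by have := stage_edge_neq um ht; move: e; rewrite -E /= => ->; rewrite eqxx.
Qed.

Lemma upper_ends_upper (m : stage1) p q : (p, q, true) \in m -> upper_ends m q.
Proof. by move=> ht; apply/hasP; exists (p, q, true) => //=; rewrite eqxx. Qed.

End ProductNetwork.
Arguments col_stage {T1 T2}.
Arguments uniq_col_stage {T1 T2 m}.

(** * Sorting 0-1 inputs on the product *)

Lemma sum_nat_ge_lt a b n : \sum_(0 <= k < n) ((a <= k) && (k < b) : nat) = minn b n - a.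
Proof.
elim: n => [|n IH]; first by rewrite big_geq //; lia.
by rewrite big_nat_recr //= IH; case: (leqP a n) => h1; case: (ltnP n b) => h2 /=; lia.
Qed.

Lemma sum_nat_ge_or_lt a b n :
  \sum_(0 <= k < n) ((a <= k) || (k < b) : nat) = n - (minn a n - b).
Proof.
elim: n => [|n IH]; first by rewrite big_geq //; lia.
by rewrite big_nat_recr //= IH; case: (leqP a n) => h1; case: (ltnP n b) => h2 /=; lia.
Qed.

Lemma sum_nat_ge a n : \sum_(0 <= k < n) ((a <= k) : nat) = n - a.
Proof.
elim: n => [|n IH]; first by rewrite big_geq //; lia.
by rewrite big_nat_recr //= IH; case: (leqP a n) => h1 /=; lia.
Qed.

Lemma sum_nat_lt b n : \sum_(0 <= k < n) ((k < b) : nat) = minn b n.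
Proof.
elim: n => [|n IH]; first by rewrite big_geq //; lia.
by rewrite big_nat_recr //= IH; case: (ltnP n b) => h1 /=; lia.
Qed.

Lemma card_preim_bij (T : finType) (pi : T -> 'I_#|T|) (P : pred nat) : bijective pi ->
  #|[set a | P (pi a)]| = \sum_(0 <= k < #|T|) P k.
Proof.
move=> bp; rewrite -sum1_card big_mkcond /= big_mkord (reindex pi) /=; last exact: onW_bij.
by apply: eq_bigr => a _; rewrite inE; case: (P _).
Qed.

Section SortedRows.
Variables T1 T2 : finType.
Variables (M2 : seq (seq (medge T2))) (pi2 : T2 -> 'I_#|T2|).
Hypothesis sorts2 : sorts_binary M2 pi2.
Hypothesis uniq2 : all (fun m2 => uniq (stage_ends m2)) M2.
Hypothesis bij2 : bijective pi2.
Implicit Types (c : T1 * T2 -> nat) (m : seq (medge T1)).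

Definition row_count c (u : T1) := #|[set a | 0 < c (u, a)]|.

Lemma row_count_le c u : row_count c u <= #|T2|.
Proof. exact: max_card. Qed.

Lemma run_row_block_binary rev c : (forall x, c x <= 1) -> forall u w,
  run_net c (row_block M2 rev) (u, w) =
    if rev u then pi2 w < row_count c u else #|T2| - row_count c u <= pi2 w.
Proof.
move=> c01 u w; rewrite run_row_block //.
pose r a := c (u, a); have r01 a : r a <= 1 by exact: c01.
case: (rev u); last by rewrite map_id_in // sorts2.
pose f x := 1 - x; have fa : {homo f : x y /~ x <= y} by move=> x y h; rewrite /f; lia.
have -> : (fun a => c (u, a)) = f \o (f \o r).
  by apply: functional_extensionality => a; rewrite /f /r /=; have := r01 a; rewrite /r; lia.
rewrite run_net_flatten -map_flatten run_edges_anti // -run_net_flatten /=.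
rewrite sorts2; last by move=> a; apply: leq_subr.
have -> : [set y | 0 < f (r y)] = ~: [set y | 0 < r y].
  by apply/setP => a; rewrite !inE /f /=; have := r01 a; case: (r a) => [|[]].
rewrite cardsCs setCK subKn ?(row_count_le c u) //.
by rewrite /f; case: leqP.
Qed.

Lemma row_count_row_block rev c : (forall x, c x <= 1) -> forall u,
  row_count (run_net c (row_block M2 rev)) u = row_count c u.
Proof.
move=> c01 u; have xle := row_count_le c u.
have -> : row_count (run_net c (row_block M2 rev)) u = #|[set a |
    if rev u then pi2 a < row_count c u else #|T2| - row_count c u <= pi2 a]|.
  by apply: eq_card => a; rewrite !inE run_row_block_binary // lt0b.
case: (rev u).
  by rewrite (card_preim_bij (fun k => k < row_count c u)) // sum_nat_lt; lia.
by rewrite (card_preim_bij (fun k => #|T2| - row_count c u <= k)) // sum_nat_ge; lia.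
Qed.

Lemma row_count_col_edge m c t u : uniq (stage_ends m) -> (forall x, c x <= 1) ->
  t \in m -> (u == t.1.1) || (u == t.1.2) ->
  row_count (run_stage (run_net c (row_block M2 (upper_ends m))) (col_stage m)) u =
  count_edge #|T2| (row_count c) t u.
Proof.
move=> um c01 ht hu; set s1 := run_net c (row_block M2 (upper_ends m)).
have Hs1 := run_row_block_binary (upper_ends m) c01.
have xle := row_count_le c.
have -> : row_count (run_stage s1 (col_stage m)) u =
          #|[set a | 0 < apply_edge s1 (col_edge a t) (u, a)]|.
  apply: eq_card => a; rewrite !inE (run_stage_in _ (uniq_col_stage um) (mem_col_stage a ht)) //.
  by case: t ht hu => [[p q] bb] /= _; rewrite !xpair_eqE eqxx !andbT.
have npq := stage_edge_neq um ht.
case: t ht hu npq => [[p q] []] ht hu /= npq; have nqp : q != p by rewrite eq_sym.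
  have lo := upper_ends_lower um ht; have up := upper_ends_upper ht.
  case/orP: hu => /eqP ->.
    have -> : #|[set a | 0 < apply_edge s1 (col_edge a (p, q, true)) (p, a)]| =
        \sum_(0 <= k < #|T2|) ((#|T2| - row_count c p <= k) && (k < row_count c q) : nat).
      rewrite -(card_preim_bij _ bij2); apply: eq_card => a.
      rewrite !inE /= !xpair_eqE !eqxx /= /s1 !Hs1 lo up.
      by case: (#|T2| - _ <= _); case: (_ < row_count c q).
    (* [set] unifies the two syntactically distinct forms of #|T2|, which lia keeps apart. *)
    rewrite sum_nat_ge_lt eqxx; have := xle p; have := xle q; set N := #|T2|; lia.
  have -> : #|[set a | 0 < apply_edge s1 (col_edge a (p, q, true)) (q, a)]| =
      \sum_(0 <= k < #|T2|) ((#|T2| - row_count c p <= k) || (k < row_count c q) : nat).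
    rewrite -(card_preim_bij _ bij2); apply: eq_card => a.
    rewrite !inE /= !xpair_eqE !eqxx (negbTE nqp) /= /s1 !Hs1 lo up.
    by case: (#|T2| - _ <= _); case: (_ < row_count c q).
  rewrite sum_nat_ge_or_lt (negbTE nqp) eqxx.
  have := xle p; have := xle q; set N := #|T2|; lia.
case/orP: hu => /eqP ->;
  rewrite ?(negbTE nqp) eqxx -(row_count_row_block (upper_ends m) c01);
  by apply: eq_card => a; rewrite !inE /= !xpair_eqE !eqxx ?(negbTE nqp).
Qed.

Lemma row_count_col_stage m c u : uniq (stage_ends m) -> (forall x, c x <= 1) ->
  row_count (run_stage (run_net c (row_block M2 (upper_ends m))) (col_stage m)) u =
  foldl (count_edge #|T2|) (row_count c) m u.
Proof.
move=> um c01.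
case: (boolP (has (fun t => (u == t.1.1) || (u == t.1.2)) m)) => [/hasP [t ht hu]|nh].
  by rewrite (count_stage_in _ _ um ht hu) (row_count_col_edge um c01 ht hu).
have nh' t : t \in m -> (u != t.1.1) && (u != t.1.2).
  by move=> ht; rewrite -negb_or; apply: contra nh => hu; apply/hasP; exists t.
rewrite count_stage_out // -(row_count_row_block (upper_ends m) c01).
apply: eq_card => a; rewrite !inE run_stage_out //.
move=> t /flattenP [l /mapP [a' _ ->] /mapP [[[p q] bb] ht' ->]] /=.
by rewrite !xpair_eqE; have /andP[/negbTE -> /negbTE ->] := nh' _ ht'.
Qed.

Lemma run_prod_net_binary M1 c : all (fun m => uniq (stage_ends m)) M1 ->
  (forall x, c x <= 1) -> forall u w,
  run_net c (prod_net M1 M2) (u, w) =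
    (#|T2| - foldl (count_edge #|T2|) (row_count c) (flatten M1) u <= pi2 w).
Proof.
elim: M1 c => [|m M1 IH] c /=; first by move=> _ c01 u w; rewrite run_row_block_binary.
case/andP => um uM c01 u w; rewrite run_net_cat /= foldl_cat.
set s1 := run_net c (row_block M2 (upper_ends m)).
have s101 x : s1 x <= 1 by exact: run_net_binary.
have s201 x : run_stage s1 (col_stage m) x <= 1 by exact: (run_net_binary [:: col_stage m]).
rewrite IH //; congr (nat_of_bool (_ - _ <= _)); congr (foldl _ _ _ _).
by apply: functional_extensionality => u'; rewrite row_count_col_stage.
Qed.

End SortedRows.

Lemma prod_threshold_arith n1 n2 p pw q i : p < n1 -> pw < n2 -> i <= n2 ->
  i * q + (n2 - i) * q.+1 <= n1 * n2 ->
  (n2 - (i * (n1 - q <= p) + (n2 - i) * (n1 - q.+1 <= p)) <= pw) =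
  (n1 * n2 - (i * q + (n2 - i) * q.+1) <= p * n2 + pw).
Proof.
move=> hp hw hi hK.
have E : i * q + (n2 - i) * q.+1 = q * n2 + (n2 - i).
  by rewrite mulnS addnCA -mulnDl subnKC // addnC mulnC.
rewrite E; rewrite E in hK.
case: (leqP (n1 - q) p) => hA.
  have hB : n1 - q.+1 <= p by lia.
  rewrite hB /= !muln1 subnKC // subnn leq0n; apply/esym.
  have : n1 * n2 <= p * n2 + q * n2 by rewrite -mulnDl leq_mul2r; apply/orP; right; lia.
  lia.
case: (leqP (n1 - q.+1) p) => hB /=.
  have hq : q < n1 by lia.
  rewrite muln0 muln1 add0n subKn //.
  have -> : n1 * n2 = (p * n2 + n2) + q * n2.
    have -> : n1 = p.+1 + q by lia.
    by rewrite mulnDl mulSn [n2 + _]addnC.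
  lia.
rewrite !muln0 addn0 subn0 leqNgt hw /=; apply/esym/negbTE; rewrite -ltnNge.
have hq : q.+2 + p <= n1 by lia.
have : (q.+2 + p) * n2 <= n1 * n2 by rewrite leq_mul2r hq orbT.
by rewrite !mulnDl !mulSn; lia.
Qed.

Lemma sum_nseq_cat (g : nat -> nat) i q n :
  \sum_(s <- nseq i q ++ nseq (n - i) q.+1) g s = i * g q + (n - i) * g q.+1.
Proof. by rewrite big_cat /= !big_nseq !iter_addn_0 mulnC [(n - i) * _]mulnC. Qed.

Section ProductSorting.
Variables T1 T2 : finType.
Variables (M1 : seq (seq (medge T1))) (M2 : seq (seq (medge T2))).
Variables (pi1 : T1 -> 'I_#|T1|) (pi2 : T2 -> 'I_#|T2|).
Hypotheses (sorts1 : sorts_binary M1 pi1) (sorts2 : sorts_binary M2 pi2).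
Hypothesis uniq1 : all (fun m => uniq (stage_ends m)) M1.
Hypothesis uniq2 : all (fun m2 => uniq (stage_ends m2)) M2.
Hypothesis bij2 : bijective pi2.

Lemma prod_rank_subproof (x : T1 * T2) : pi1 x.1 * #|T2| + pi2 x.2 < #|{: T1 * T2}|.
Proof.
rewrite card_prod; have h1 := ltn_ord (pi1 x.1); have h2 := ltn_ord (pi2 x.2).
apply: (@leq_trans (pi1 x.1 * #|T2| + #|T2|)); first by rewrite ltn_add2l.
by rewrite addnC -mulSn leq_mul2r h1 orbT.
Qed.

Definition prod_rank (x : T1 * T2) : 'I_#|{: T1 * T2}| := Ordinal (prod_rank_subproof x).

Lemma sum_run_binary (D : seq (T1 -> nat)) u : all binary D ->
  \sum_(d <- D) foldl (@apply_edge T1) d (flatten M1) u =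
  \sum_(d <- D) (#|T1| - weight d <= pi1 u).
Proof.
elim: D => [|d D IH] /=; first by rewrite !big_nil.
case/andP => zd zD; rewrite !big_cons IH //; congr (_ + _).
by rewrite -run_net_flatten sorts1 ?card_pos_binary // => y; apply: binary_le1.
Qed.

Lemma card_pos_rows (b : T1 * T2 -> nat) : #|[set y | 0 < b y]| = \sum_(u : T1) row_count b u.
Proof.
rewrite -sum1_card big_mkcond /=.
have -> : \sum_(y : T1 * T2) (if y \in [set y | 0 < b y] then 1 else 0) =
          \sum_(u : T1) \sum_(w : T2) (if (u, w) \in [set y | 0 < b y] then 1 else 0).
  by rewrite pair_big; apply: eq_big => // -[].
apply: eq_bigr => u _.
rewrite /row_count -sum1_card [RHS]big_mkcond /=.
by apply: eq_bigr => w _; rewrite !inE.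
Qed.

Lemma sorts_binary_prod_net : sorts_binary (prod_net M1 M2) prod_rank.
Proof.
move=> b b01 [u w]; rewrite (run_prod_net_binary sorts2 uniq2 bij2) //.
have rcle u' : row_count b u' <= #|T2| by apply: row_count_le.
have nloop : all (fun t => t.1.1 != t.1.2) (flatten M1).
  by apply/allP => t /flattenP [m hm ht]; exact: stage_edge_neq (allP uniq1 m hm) ht.
have [D [zD sD [q [i [im wD]]] fD]] := count_run_decomposition rcle nloop.
rewrite fD sum_run_binary // -(big_map weight predT (fun s => nat_of_bool (#|T1| - s <= pi1 u))) wD.
have card_b : #|[set y | 0 < b y]| = i * q + (#|T2| - i) * q.+1.
  rewrite card_pos_rows (eq_bigr _ (fun u' _ => esym (sD u'))) exchange_big /=.
  by rewrite -(big_map weight predT id) wD sum_nseq_cat mulnC [(_ - i) * _]mulnC.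
rewrite sum_nseq_cat card_b /= card_prod prod_threshold_arith //.
by rewrite -card_b -card_prod max_card.
Qed.

End ProductSorting.

Section ProductValidity.
Variables (T1 T2 : finType) (h1 : rel T1) (h2 : rel T2).
Local Notation h := (cart_rel h1 h2).

Lemma connect_cart_row w a b : connect h1 a b -> connect h (a, w) (b, w).
Proof.
move/connectP => [p pp ->]; elim: p a pp => [|c p IH] a /=; first by rewrite connect0.
case/andP => hac pp; apply: connect_trans (connect1 _) (IH _ pp).
by rewrite /cart_rel /= eqxx hac orbT.
Qed.

Lemma connect_cart_col u a b : connect h2 a b -> connect h (u, a) (u, b).
Proof.
move/connectP => [p pp ->]; elim: p a pp => [|c p IH] a /=; first by rewrite connect0.
case/andP => hac pp; apply: connect_trans (connect1 _) (IH _ pp).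
by rewrite /cart_rel /= eqxx hac.
Qed.

Lemma dmatching_row_stage (rev : T1 -> bool) (m2 : seq (medge T2)) :
  symmetric h2 -> is_dmatching h2 m2 -> is_dmatching h (row_stage rev m2).
Proof.
move=> sym2 /andP [/allP ah um]; apply/andP; split; last exact: uniq_row_stage.
apply/allP => t /flattenP [l /mapP [u _ ->] /mapP [[[a b] bb] ht ->]].
rewrite /cart_rel /= eqxx /=; move: ht; rewrite /orient.
case: (rev u) => [/mapP [[[a' b'] bb'] /ah /= hab]|/ah /= -> //].
by case: bb' => -[-> -> _]; [rewrite sym2 hab | rewrite hab].
Qed.

Lemma dmatching_col_stage (m : seq (medge T1)) :
  is_dmatching h1 m -> is_dmatching h (col_stage m).
Proof.
move=> /andP [/allP ah um]; apply/andP; split; last exact: uniq_col_stage.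
apply/allP => t /flattenP [l /mapP [w _ ->] /mapP [[[a b] bb] /ah hab ->]].
by rewrite /cart_rel /= eqxx hab orbT.
Qed.

Lemma row_stage_covers (rev : T1 -> bool) (m2 : seq (medge T2)) u a c bb : (a, c, bb) \in m2 ->
  exists b, (((u, a), (u, c), b) \in row_stage rev m2) ||
            (((u, c), (u, a), b) \in row_stage rev m2).
Proof.
move=> ht; case E: (rev u).
  have hr : reverse_edge (a, c, bb) \in orient (rev u) m2 by rewrite E; exact: map_f.
  have := mem_row_stage hr; case: bb {ht hr} => /= hr.
    by exists true; rewrite hr orbT.
  by exists false; rewrite hr.
have hr : (a, c, bb) \in orient (rev u) m2 by rewrite E.
by exists bb; rewrite (mem_row_stage hr).
Qed.

End ProductValidity.

Lemma prod_rank_inj (T1 T2 : finType) (pi1 : T1 -> 'I_#|T1|) (pi2 : T2 -> 'I_#|T2|) :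
  injective pi1 -> injective pi2 -> injective (prod_rank pi1 pi2).
Proof.
move=> i1 i2 [u1 w1] [u2 w2] /(congr1 val) /= E.
have n2p : 0 < #|T2| by apply/card_gt0P; exists w1.
have E2 : pi2 w1 = pi2 w2.
  apply: val_inj; move: (congr1 (modn^~ #|T2|) E).
  by rewrite /= !modnMDl !modn_small ?ltn_ord.
have E1 : pi1 u1 = pi1 u2.
  apply: val_inj; move: (congr1 (divn^~ #|T2|) E).
  by rewrite /= !divnMDl // !divn_small ?ltn_ord ?addn0.
by rewrite (i1 _ _ E1) (i2 _ _ E2).
Qed.

Section ProductIsSortingNetwork.
Variables (T1 T2 : finType) (e1 h1 : rel T1) (e2 h2 : rel T2).
Variables (M1 : seq (seq (medge T1))) (M2 : seq (seq (medge T2))).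
Variables (pi1 : T1 -> 'I_#|T1|) (pi2 : T2 -> 'I_#|T2|).
Hypotheses (N1 : sorting_network e1 h1 M1 pi1) (N2 : sorting_network e2 h2 M2 pi2).

Lemma prod_net_covers x y : cart_rel h1 h2 x y ->
  exists m, m \in prod_net M1 M2 /\ exists b, ((x, y, b) \in m) || ((y, x, b) \in m).
Proof.
case: N1 N2 => _ _ cov1 _ _ [_ _ cov2 _ _].
move: x y => [u1 w1] [u2 w2]; rewrite /cart_rel /= => /orP [] /andP [/eqP <- hx].
  have [m2 [hm [b hb]]] := cov2 _ _ hx.
  have [rev Hrev] := row_stages_in_prod_net M1 M2.
  exists (row_stage rev m2); split; first exact: Hrev.
  case/orP: hb => /(row_stage_covers rev u1) [b' hb']; exists b' => //.
  by rewrite orbC.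
have [m [hm [b hb]]] := cov1 _ _ hx.
exists (col_stage m); split; first exact: col_stage_in_prod_net.
by exists b; case/orP: hb => /(mem_col_stage w1) ->; rewrite ?orbT.
Qed.

Lemma sorting_network_prod :
  sorting_network (cart_rel e1 e2) (cart_rel h1 h2) (prod_net M1 M2) (prod_rank pi1 pi2).
Proof.
have cov := prod_net_covers.
case: N1 N2 => [[sub1 sym1 con1] dm1 _ bij1 rk1] [[sub2 sym2 con2] dm2 _ bij2 rk2].
have uniq1 : all (fun m => uniq (stage_ends m)) M1 by apply: sub_all dm1 => m /andP [].
have uniq2 : all (fun m => uniq (stage_ends m)) M2 by apply: sub_all dm2 => m /andP [].
split => //.
- split.
  + move=> x y /orP [] /andP [ex hx]; apply/orP; [left | right];
      by rewrite ex ?sub1 ?sub2.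
  + by move=> x y; rewrite /cart_rel sym1 sym2 (eq_sym x.1) (eq_sym x.2).
  + move=> [u1 w1] [u2 w2].
    exact: connect_trans (connect_cart_row h2 w1 (con1 u1 u2))
                         (connect_cart_col h1 u2 (con2 w1 w2)).
- apply/allP => s /mem_prod_net [[rev [m2 [hm ->]]]|[m hm ->]].
    exact: dmatching_row_stage sym2 (allP dm2 m2 hm).
  exact: dmatching_col_stage (allP dm1 m hm).
- apply: (inj_card_bij (prod_rank_inj (bij_inj bij1) (bij_inj bij2))).
  by rewrite card_ord.
- apply: sorts_ranks_of_binary; apply: sorts_binary_prod_net uniq1 uniq2 bij2;
  exact: sorts_binary_of_ranks.
Qed.

End ProductIsSortingNetwork.

Lemma ex_minimal_nat (P : nat -> Prop) :
  (exists n, P n) -> exists n, P n /\ forall k, P k -> n <= k.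
Proof.
move=> [n Pn]; elim/ltn_ind: n Pn => n IH Pn.
case: (classic (exists k, k < n /\ P k)) => [[k [kn Pk]]|H]; first exact: IH k kn Pk.
exists n; split => // k Pk; rewrite leqNgt; apply/negP => kn; apply: H; by exists k.
Qed.

Lemma sorting_number_le (T : finType) (e h : rel T) M (pi : T -> 'I_#|T|) :
  sorting_network e h M pi -> exists2 s, sorting_number e s & s <= size M.
Proof.
move=> SN; pose depth n := exists h M pi, @sorting_network T e h M pi /\ size M = n.
have [n [Dn Dmin]] : exists n, depth n /\ forall k, depth k -> n <= k.
  by apply: ex_minimal_nat; exists (size M), h, M, pi.
exists n; last by apply: Dmin; exists h, M, pi.
by split => // h' M' pi' SN'; apply: Dmin; exists h', M', pi'.
Qed.

Theorem theorem2 (T1 T2 : finType) (e1 : rel T1) (e2 : rel T2) :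
  symmetric e1 -> irreflexive e1 -> symmetric e2 -> irreflexive e2 ->
  forall s1 s2 : nat, sorting_number e1 s1 -> sorting_number e2 s2 ->
  exists2 s : nat, sorting_number (cart_rel e1 e2) s & s <= s1 * s2 + s1 + s2.
Proof.
move=> _ _ _ _ s1 s2 [[h1 [M1 [pi1 [N1 <-]]]] _] [[h2 [M2 [pi2 [N2 <-]]]] _].
have [s st_s s_le] := sorting_number_le (sorting_network_prod N1 N2).
by exists s; rewrite // -mulnSr -size_prod_net.
Qed.
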